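(* Let $a,b$ be real with $0<a<a+b<1$. If $a+b>1/2$ then \[ \frac{\Gamma(a+b)}{\Gamma(a+2b)}<\frac{\Gamma(1-a-b)}{\Gamma(1-a)}, \] and if $a+b<1/2$ the reverse strict inequality holds.
   Context: $\Gamma$ denotes the Euler gamma function. *)

From Stdlib Require Import Reals.
From Coquelicot Require Import Coquelicot.
Open Scope R_scope.

Definition Gamma (x : R) : R :=
  RInt_gen (fun t => Rpower t (x - 1) * exp (- t))
           (at_right 0) (Rbar_locally p_infty).

(* The heart of the matter is that x |-> Gamma (x + b) / Gamma x is strictly
   increasing for b > 0.  With c = Gamma (x + b) / Gamma x, t0 = c^(1/b) and
   d = y - x > 0, the integrand (t^b - t0^b) (t^d - t0^d) t^(x-1) e^(-t) is
   nonnegative (both factors change sign at t0) and not identically zero,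
   while its integral expands to Gamma (y + b) - c Gamma y.  Both inequalities
   of the theorem are instances of Gamma (x + b) Gamma y < Gamma x Gamma (y + b),
   with (x, y) = (1 - a - b, a + b) or (a + b, 1 - a - b). *)

From Stdlib Require Import Reals Lra Classical_Prop.
From Coquelicot Require Import Coquelicot.
Open Scope R_scope.

Lemma Rpower_pos t r : 0 < Rpower t r.
Proof. apply exp_pos. Qed.

Lemma Rpower_1_l r : Rpower 1 r = 1.
Proof. unfold Rpower; rewrite ln_1, Rmult_0_r; apply exp_0. Qed.

Lemma exp_opp_le_Rpower k t :
  0 < k -> 0 < t -> exp (- t) <= Rpower k k * Rpower t (- k).
Proof.
  intros hk ht; unfold Rpower; rewrite <- exp_plus.
  assert (ln_le : ln (t / k) <= t / k - 1).
  { pose proof (exp_ineq1_le (ln (t / k))) as h.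
    rewrite exp_ln in h by (apply Rdiv_lt_0_compat; lra); lra. }
  rewrite ln_div in ln_le by lra.
  assert (hk_ln : k * (ln t - ln k) <= k * (t / k - 1)) by (apply Rmult_le_compat_l; lra).
  replace (k * (t / k - 1)) with (t - k) in hk_ln by (field; lra).
  destruct (Rle_lt_or_eq_dec (- t) (k * ln k + - k * ln t)) as [hlt|heq]; [nra| |].
  - exact (Rlt_le _ _ (exp_increasing _ _ hlt)).
  - rewrite heq; lra.
Qed.

Lemma is_RInt_Rpower x a b : x <> 0 -> 0 < a -> 0 < b ->
  is_RInt (fun t => Rpower t (x - 1)) a b ((Rpower b x - Rpower a x) / x).
Proof.
  intros hx ha hb.
  assert (pos_between : forall t, Rmin a b <= t <= Rmax a b -> 0 < t).
  { intros t; apply Rmin_case; apply Rmax_case; lra. }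
  replace ((Rpower b x - Rpower a x) / x) with
    (minus ((fun t => Rpower t x / x) b) ((fun t => Rpower t x / x) a))
    by (unfold minus, plus, opp; simpl; field; exact hx).
  apply (is_RInt_derive (V := R_CompleteNormedModule) (fun t => Rpower t x / x)).
  - intros t ht; pose proof (pos_between t ht).
    unfold Rpower; auto_derive; [lra|].
    replace ((x - 1) * ln t) with (x * ln t + - ln t) by ring.
    rewrite exp_plus, exp_Ropp, exp_ln by lra.
    field; split; lra.
  - intros t ht; pose proof (pos_between t ht).
    apply (ex_derive_continuous (fun t => Rpower t (x - 1))).
    unfold Rpower; auto_derive; lra.
Qed.

Section NonnegImproperIntegral.

Variable f : R -> R.
Hypothesis f_cont : forall t, 0 < t -> continuous f t.
Hypothesis f_ge0 : forall t, 0 < t -> 0 <= f t.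

Local Notation is_RInt_0_inf f V :=
  (is_RInt_gen f (at_right 0) (Rbar_locally p_infty) V).

Lemma ex_RInt_pos u v : 0 < u -> u <= v -> ex_RInt f u v.
Proof.
  intros hu huv; apply (ex_RInt_continuous (V := R_CompleteNormedModule)).
  intros z hz; apply f_cont; rewrite Rmin_left in hz; lra.
Qed.

Lemma RInt_le_RInt_superset a p q b :
  0 < a -> a <= p -> p <= q -> q <= b -> RInt f p q <= RInt f a b.
Proof.
  intros ha hap hpq hqb.
  rewrite <- (RInt_Chasles f a p b) by (apply ex_RInt_pos; lra).
  rewrite <- (RInt_Chasles f p q b) by (apply ex_RInt_pos; lra).
  assert (left_ge0 : 0 <= RInt f a p)
     by (apply RInt_ge_0; [lra | apply ex_RInt_pos; lra | intros; apply f_ge0; lra]).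
  assert (right_ge0 : 0 <= RInt f q b)
     by (apply RInt_ge_0; [lra | apply ex_RInt_pos; lra | intros; apply f_ge0; lra]).
  unfold plus; simpl; lra.
Qed.

Lemma RInt_le_is_RInt_gen V p q :
  is_RInt_0_inf f V -> 0 < p -> p <= q -> RInt f p q <= V.
Proof.
  intros hV hp hpq.
  apply Rnot_lt_le; intro hlt.
  destruct (hV (ball V (RInt f p q - V))) as [Q S [d hQ] [M hS] hQS].
  { exists (mkposreal (RInt f p q - V) ltac:(lra)); easy. }
  pose proof (cond_pos d) as hd.
  set (a := Rmin p d / 2); set (b := Rmax q M + 1).
  assert (ha : 0 < a < d /\ a <= p).
  { unfold a; pose proof (Rmin_l p d); pose proof (Rmin_r p d).
    pose proof (Rmin_pos p d hp hd); lra. }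
  assert (hb : q <= b /\ M < b) by (unfold b; pose proof (Rmax_l q M); pose proof (Rmax_r q M); lra).
  assert (hQa : Q a).
  { apply hQ; [|lra]. change (Rabs (a + - 0) < d); rewrite Rabs_right; lra. }
  destruct (hQS a b hQa (hS b (proj2 hb))) as [y [hy hyV]]; simpl in hy.
  apply (is_RInt_unique (V := R_CompleteNormedModule)) in hy.
  assert (RInt f p q <= y) by (rewrite <- hy; apply RInt_le_RInt_superset; lra).
  change (Rabs (y + - V) < RInt f p q - V) in hyV.
  apply Rabs_def2 in hyV; lra.
Qed.

Lemma is_RInt_gen_gt_0 V p q :
  is_RInt_0_inf f V -> 0 < p < q -> (forall t, p < t < q -> 0 < f t) -> 0 < V.
Proof.
  intros hV hpq hpos.
  pose proof (RInt_gt_0 f p q (proj2 hpq) hpos (fun t ht => f_cont t ltac:(lra))).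
  pose proof (RInt_le_is_RInt_gen V p q hV ltac:(lra) ltac:(lra)); lra.
Qed.

(* Completeness: the integral over (0, +oo) is the supremum of the integrals
   over the compact intervals [a, b] with a < 1 < b. *)
Lemma ex_RInt_gen_of_bounded B :
  (forall a b, 0 < a < 1 -> 1 < b -> RInt f a b <= B) ->
  exists L, is_RInt_0_inf f L.
Proof.
  intros hB.
  set (E := fun y => exists a b, 0 < a < 1 /\ 1 < b /\ y = RInt f a b).
  destruct (completeness E) as [L [L_ub L_lub]].
  { exists B; intros y [a [b [ha [hb ->]]]]; now apply hB. }
  { exists (RInt f (1/2) 2), (1/2), 2; repeat split; lra. }
  exists L; intros P [eps hP].
  pose proof (cond_pos eps) as heps.
  assert (near_sup :
    exists a0 b0, 0 < a0 < 1 /\ 1 < b0 /\ L - eps < RInt f a0 b0).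
  { apply NNPP; intro hnone.
    enough (L <= L - eps) by lra.
    apply L_lub; intros y [a [b [ha [hb ->]]]].
    apply Rnot_lt_le; intro; apply hnone; now exists a, b. }
  destruct near_sup as [a0 [b0 [ha0 [hb0 hnear]]]].
  apply (Filter_prod _ _ _ (fun a => 0 < a < a0) (fun b => b0 < b)).
  - exists (mkposreal _ (proj1 ha0)); intros u hu hu0; split; [exact hu0|].
    change (Rabs (u + - 0) < a0) in hu; apply Rabs_def2 in hu; lra.
  - now exists b0.
  - intros a b ha hb; exists (RInt f a b); split.
    + apply (RInt_correct (V := R_CompleteNormedModule)), ex_RInt_pos; lra.
    + apply hP; change (Rabs (RInt f a b + - L) < eps).
      assert (RInt f a0 b0 <= RInt f a b) by (apply RInt_le_RInt_superset; lra).
      assert (RInt f a b <= L) by (apply L_ub; exists a, b; repeat split; lra).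
      apply Rabs_def1; lra.
Qed.

End NonnegImproperIntegral.

Definition gamma_integrand (x t : R) := Rpower t (x - 1) * exp (- t).

Lemma gamma_integrand_pos x t : 0 < gamma_integrand x t.
Proof. apply Rmult_lt_0_compat; [apply Rpower_pos | apply exp_pos]. Qed.

Lemma continuous_gamma_integrand x t : 0 < t -> continuous (gamma_integrand x) t.
Proof.
  intro ht; apply (ex_derive_continuous (gamma_integrand x)).
  unfold gamma_integrand, Rpower; auto_derive; lra.
Qed.

Lemma gamma_integrand_shift x s t :
  gamma_integrand (x + s) t = Rpower t s * gamma_integrand x t.
Proof.
  unfold gamma_integrand; replace (x + s - 1) with (s + (x - 1)) by ring.
  rewrite Rpower_plus; ring.
Qed.

Lemma RInt_gamma_integrand_le_0_1 x a :
  0 < x -> 0 < a < 1 -> RInt (gamma_integrand x) a 1 <= 1 / x.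
Proof.
  intros hx ha.
  pose proof (is_RInt_Rpower x a 1 ltac:(lra) ltac:(lra) ltac:(lra)) as hpow.
  rewrite Rpower_1_l in hpow.
  apply Rle_trans with ((1 - Rpower a x) / x).
  - rewrite <- (is_RInt_unique (V := R_CompleteNormedModule) _ _ _ _ hpow).
    apply RInt_le; [lra | apply ex_RInt_pos; [apply continuous_gamma_integrand|lra|lra] |
                    eexists; exact hpow |].
    intros t ht; unfold gamma_integrand.
    rewrite <- (Rmult_1_r (Rpower t (x - 1))) at 2.
    apply Rmult_le_compat_l; [apply Rlt_le, Rpower_pos|].
    rewrite <- exp_0; apply Rlt_le, exp_increasing; lra.
  - pose proof (Rpower_pos a x).
    apply Rmult_le_compat_r; [apply Rlt_le, Rinv_0_lt_compat|]; lra.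
Qed.

(* On [1, b] the integrand is at most K t^(-2), K = (x+1)^(x+1). *)
Lemma RInt_gamma_integrand_le_1_inf x b :
  0 < x -> 1 < b -> RInt (gamma_integrand x) 1 b <= Rpower (x + 1) (x + 1).
Proof.
  intros hx hb.
  set (K := Rpower (x + 1) (x + 1)).
  assert (hpow : is_RInt (fun t => K * Rpower t (-1 - 1)) 1 b (K * (1 - Rpower b (-1)))).
  { replace (K * (1 - Rpower b (-1))) with (scal K ((Rpower b (-1) - Rpower 1 (-1)) / -1))
      by (rewrite Rpower_1_l; unfold scal; simpl; unfold mult; simpl; field).
    apply (is_RInt_scal (fun t => Rpower t (-1 - 1))), is_RInt_Rpower; lra. }
  apply Rle_trans with (K * (1 - Rpower b (-1))).
  - rewrite <- (is_RInt_unique _ _ _ _ hpow).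
    apply RInt_le; [lra | apply ex_RInt_pos; [apply continuous_gamma_integrand|lra|lra] |
                    eexists; exact hpow |].
    intros t ht.
    replace (-1 - 1) with ((x - 1) + - (x + 1)) by ring.
    rewrite Rpower_plus; unfold gamma_integrand.
    pose proof (exp_opp_le_Rpower (x + 1) t ltac:(lra) ltac:(lra)) as hexp.
    fold K in hexp; pose proof (Rpower_pos t (x - 1)); nra.
  - pose proof (Rpower_pos b (-1)); assert (0 < K) by apply Rpower_pos.
    nra.
Qed.

Lemma is_RInt_gen_Gamma x : 0 < x ->
  is_RInt_gen (gamma_integrand x) (at_right 0) (Rbar_locally p_infty) (Gamma x).
Proof.
  intro hx.
  assert (cont : forall t, 0 < t -> continuous (gamma_integrand x) t)
    by (intros t ht; now apply continuous_gamma_integrand).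
  assert (ge0 : forall t, 0 < t -> 0 <= gamma_integrand x t)
    by (intros; apply Rlt_le, gamma_integrand_pos).
  destruct (ex_RInt_gen_of_bounded _ cont ge0 (1 / x + Rpower (x + 1) (x + 1)))
    as [L hL].
  - intros a b ha hb.
    rewrite <- (RInt_Chasles _ a 1 b) by (apply ex_RInt_pos; auto; lra).
    pose proof (RInt_gamma_integrand_le_0_1 x a hx ha).
    pose proof (RInt_gamma_integrand_le_1_inf x b hx hb).
    unfold plus; simpl; lra.
  - unfold Gamma; fold (gamma_integrand x).
    now rewrite (is_RInt_gen_unique _ _ hL).
Qed.

Lemma Gamma_pos x : 0 < x -> 0 < Gamma x.
Proof.
  intro hx.
  apply (is_RInt_gen_gt_0 _ (continuous_gamma_integrand x)
           (fun t _ => Rlt_le _ _ (gamma_integrand_pos x t)) _ 1 2 (is_RInt_gen_Gamma x hx)).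
  - lra.
  - intros; apply gamma_integrand_pos.
Qed.

Lemma Rpower_sub_mul_gt_0 t0 t b d : 0 < b -> 0 < d -> 0 < t0 -> 0 < t -> t <> t0 ->
  0 < (Rpower t b - Rpower t0 b) * (Rpower t d - Rpower t0 d).
Proof.
  intros hb hd ht0 ht hne.
  destruct (Rdichotomy _ _ hne) as [hlt|hgt].
  - pose proof (Rlt_Rpower_l t t0 b hb (conj ht hlt)).
    pose proof (Rlt_Rpower_l t t0 d hd (conj ht hlt)); nra.
  - pose proof (Rlt_Rpower_l t0 t b hb (conj ht0 hgt)).
    pose proof (Rlt_Rpower_l t0 t d hd (conj ht0 hgt)); nra.
Qed.

Lemma is_RInt_gen_Gamma_combination x b d c K : 0 < x -> 0 < b -> 0 < d ->
  is_RInt_gen (fun t => (Rpower t b - c) * (Rpower t d - K) * gamma_integrand x t)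
    (at_right 0) (Rbar_locally p_infty)
    (Gamma (x + b + d) - K * Gamma (x + b) - c * Gamma (x + d) + c * K * Gamma x).
Proof.
  intros hx hb hd.
  assert (hxb : 0 < x + b) by lra; assert (hxd : 0 < x + d) by lra.
  assert (hxbd : 0 < x + b + d) by lra.
  eapply is_RInt_gen_ext; [|
    exact (is_RInt_gen_plus _ _ _ _
      (is_RInt_gen_minus _ _ _ _
         (is_RInt_gen_minus _ _ _ _ (is_RInt_gen_Gamma _ hxbd)
            (is_RInt_gen_scal _ K _ (is_RInt_gen_Gamma _ hxb)))
         (is_RInt_gen_scal _ c _ (is_RInt_gen_Gamma _ hxd)))
      (is_RInt_gen_scal _ (c * K) _ (is_RInt_gen_Gamma _ hx)))].
  apply filter_forall; intros _ t _.
  rewrite !gamma_integrand_shift.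
  unfold plus, minus, scal, opp; simpl; unfold mult, plus, opp; simpl; ring.
Qed.

Lemma Gamma_mul_shift_lt x y b : 0 < x -> x < y -> 0 < b ->
  Gamma (x + b) * Gamma y < Gamma x * Gamma (y + b).
Proof.
  intros hx hxy hb.
  pose proof (Gamma_pos x hx) as gx; pose proof (Gamma_pos y ltac:(lra)) as gy.
  set (c := Gamma (x + b) / Gamma x).
  assert (hc : 0 < c) by (apply Rdiv_lt_0_compat; [apply Gamma_pos|]; lra).
  set (t0 := Rpower c (/ b)).
  assert (ht0 : Rpower t0 b = c).
  { unfold t0; rewrite Rpower_mult, Rinv_l by lra; apply Rpower_1; exact hc. }
  assert (t0_pos : 0 < t0) by apply Rpower_pos.
  set (d := y - x); set (K := Rpower t0 d).
  set (h := fun t => (Rpower t b - c) * (Rpower t d - K) * gamma_integrand x t).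
  assert (h_cont : forall t, 0 < t -> continuous h t).
  { intros t ht; apply (ex_derive_continuous h).
    unfold h, gamma_integrand, Rpower; auto_derive; lra. }
  assert (h_pos : forall t, 0 < t -> t <> t0 -> 0 < h t).
  { intros t ht hne; apply Rmult_lt_0_compat; [|apply gamma_integrand_pos].
    rewrite <- ht0; apply Rpower_sub_mul_gt_0; unfold d in *; lra. }
  assert (h_ge0 : forall t, 0 < t -> 0 <= h t).
  { intros t ht; destruct (Req_dec t t0) as [->|hne].
    - unfold h; rewrite ht0; fold K; lra.
    - exact (Rlt_le _ _ (h_pos t ht hne)). }
  assert (hV : 0 < Gamma (y + b) - c * Gamma y).
  { replace (Gamma (y + b) - c * Gamma y) with
      (Gamma (x + b + d) - K * Gamma (x + b) - c * Gamma (x + d) + c * K * Gamma x)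
      by (unfold c, d; replace (x + b + (y - x)) with (y + b) by ring;
          replace (x + (y - x)) with y by ring; field; lra).
    apply (is_RInt_gen_gt_0 h h_cont h_ge0 _ (t0 + 1) (t0 + 2)).
    - apply is_RInt_gen_Gamma_combination; unfold d; lra.
    - lra.
    - intros t ht; apply h_pos; lra. }
  unfold c in hV.
  apply (Rmult_lt_compat_l (Gamma x)) in hV; [|lra].
  replace (Gamma x * (Gamma (y + b) - Gamma (x + b) / Gamma x * Gamma y))
    with (Gamma x * Gamma (y + b) - Gamma (x + b) * Gamma y) in hV by (field; lra).
  lra.
Qed.

Lemma Rdiv_lt_cross p q r s : 0 < q -> 0 < s -> p * s < r * q -> p / q < r / s.
Proof.
  intros hq hs h; apply (Rmult_lt_reg_r (q * s)); [nra|].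
  replace (p / q * (q * s)) with (p * s) by (field; lra).
  replace (r / s * (q * s)) with (r * q) by (field; lra); lra.
Qed.

Theorem lemma2 (a b : R) (ha : 0 < a) (hab : a < a + b) (hab1 : a + b < 1) :
  (a + b > 1/2 ->
     Gamma (a + b) / Gamma (a + 2 * b) < Gamma (1 - a - b) / Gamma (1 - a)) /\
  (a + b < 1/2 ->
     Gamma (a + b) / Gamma (a + 2 * b) > Gamma (1 - a - b) / Gamma (1 - a)).
Proof.
  replace (Gamma (a + 2 * b)) with (Gamma (a + b + b)) by (f_equal; ring).
  replace (Gamma (1 - a)) with (Gamma (1 - a - b + b)) by (f_equal; ring).
  pose proof (Gamma_pos (a + b + b) ltac:(lra)).
  pose proof (Gamma_pos (1 - a - b + b) ltac:(lra)).
  split; intro hs; apply Rdiv_lt_cross; try assumption; rewrite Rmult_comm;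
    apply Gamma_mul_shift_lt; lra.
Qed.
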